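(* Let $\underline{\mathbb{G}}=(\mathbb{G},\mathcal{V},\omega_{\mathcal{V}},\mathcal{F},\omega_{\mathcal{F}})$ be a packaged ribbon graph with dual $\underline{\mathbb{G}}^*$. Then \[\boldsymbol{T}(\underline{\mathbb{G}};\boldsymbol{x},\boldsymbol{y})=\boldsymbol{T}(\underline{\mathbb{G}}^*; \boldsymbol{y},\boldsymbol{x}),\] i.e. the right-hand side is obtained by evaluating $\boldsymbol{T}(\underline{\mathbb{G}}^*;\cdot,\cdot)$ with the roles of the variable tuples $\boldsymbol{x}$ and $\boldsymbol{y}$ interchanged.
   Context: All ribbon graphs are orientable. A ribbon graph $\mathbb{G}=(V,E)$ is an orientable surface with boundary formed as a union of discs $V$ (vertices) and discs $E$ (edges) meeting in disjoint arcs, each arc on the boundary of exactly one vertex and one edge, each edge containing two arcs. For a ribbon graph, $v,e,f,k$ denote numbers of vertices, edges, boundary components, components; for a graph, $v,e,k$ likewise and nullity $n=e-v+k$. $\mathbb{G}|A$ ($A\subseteq E$) is the spanning ribbon subgraph with edge set $A$; $A^c=E\setminus A$. The dual $\mathbb{G}^*$ is obtained by capping each boundary component of $\mathbb{G}$ with a disc; these discs are the vertices of $\mathbb{G}^*$, edges are those of $\mathbb{G}$; vertices of $\mathbb{G}^*$ are identified with boundary components of $\mathbb{G}$ and boundary components of $\mathbb{G}^*$ with vertices of $\mathbb{G}$. A packaged ribbon graph is $\underline{\mathbb{G}}=(\mathbb{G},\mathcal{V},\omega_{\mathcal{V}},\mathcal{F},\omega_{\mathcal{F}})$ with $\mathbb{G}=(V,E)$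 a ribbon graph with boundary components $F$, $\mathcal{V}$ a partition of $V$, $\mathcal{F}$ a partition of $F$, weightings $\omega_{\mathcal{V}}:\mathcal{V}\to\mathbb{N}_0$, $\omega_{\mathcal{F}}:\mathcal{F}\to\mathbb{N}_0$. Its dual is $\underline{\mathbb{G}}^*=(\mathbb{G}^*,\mathcal{F},\omega_{\mathcal{F}},\mathcal{V},\omega_{\mathcal{V}})$, where $\mathcal{F}$ is viewed as a partition of the vertices of $\mathbb{G}^*$ and $\mathcal{V}$ as a partition of the boundary components of $\mathbb{G}^*$. Packaging: for a ribbon graph $\mathbb{H}$ with partition $\mathcal{P}$ of its vertices and block weights $\omega$, $G(\mathbb{H};\mathcal{P})$ has vertex set $\mathcal{P}$ and an edge $([u],[v])$ for each edge $(u,v)$ of $\mathbb{H}$ (loops/multi-edges allowed), vertices weighted by $\omega$. For a subgraph $K$, $\mathbb{H}[K]$ is the ribbon subgraph of $\mathbb{H}$ consisting of all vertices in blocks that are vertices of $K$ and the edges corresponding to edges of $K$; $f(\mathbb{H}[K])$ is its number of boundary components; $\omega(K)$ is the sum of weights of vertices of $K$. The packaged surface Tutte polynomial, with $\boldsymbol{x}=(x,x_0,x_{1/2},x_1,\dots)$, $\boldsymbol{y}=(y,y_0,y_{1/2},y_1,\dots)$: \[\boldsymbol{T}(\underline{\mathbb{G}};\boldsymbol{x},\boldsymbol{y})= \sum_{A\subseteq E} x^{n(G(\mathbb{G}^*|A^c;\mathcal{F}))}y^{n(G(\mathbb{G}|A;\mathcal{V}))}\prod_{H \text{ cpt. of }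 G(\mathbb{G}^*|A^c;\mathcal{F})}x_{g(\mathbb{G}^*,H)}\prod_{K \text{ cpt. of } G(\mathbb{G}|A;\mathcal{V})}y_{g(\mathbb{G},K)},\] where $G(\mathbb{G}|A;\mathcal{V})$ uses weights $\omega_{\mathcal{V}}$, $G(\mathbb{G}^*|A^c;\mathcal{F})$ uses weights $\omega_{\mathcal{F}}$, $g(\mathbb{G},K)=\tfrac12(2k(K)+e(K)-v(K)+\omega_{\mathcal{V}}(K)-f(\mathbb{G}[K]))$ and $g(\mathbb{G}^*,H)=\tfrac12(2k(H)+e(H)-v(H)+\omega_{\mathcal{F}}(H)-f(\mathbb{G}^*[H]))$. *)

From HB Require Import structures.
From mathcomp Require Import all_boot all_algebra.
Unset Printing Implicit Defensive.
Import GRing.Theory.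

(* Darts are pairs (e, b) : rE * bool, the two ends of
   edge e; the edge involution alpha is [flip].  [rot] is the vertex rotation
   sigma; boundary components are orbits of phi = rot \o flip, together with
   one boundary component for each isolated (dartless) vertex. *)
Record ribbon := Ribbon {
  rV : finType;
  rF : finType;
  rE : finType;
  rot : rE * bool -> rE * bool;
  vtx : rE * bool -> rV;
  fce : rE * bool -> rF;
  isoVF : rV -> rF;           (* isolated vertex |-> its boundary component *)
  isoFV : rF -> rV
}.
Arguments rot : clear implicits. Arguments vtx : clear implicits.
Arguments fce : clear implicits. Arguments isoVF : clear implicits.
Arguments isoFV : clear implicits.

Definition flip {E : Type} (d : E * bool) : E * bool := (d.1, ~~ d.2).

Definition phi (G : ribbon) (d : rE G * bool) : rE G * bool := rot G (flip d).

Definition dartless_v (G : ribbon) (v : rV G) : bool := [forall d, vtx G d != v].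
Definition dartless_f (G : ribbon) (f : rF G) : bool := [forall d, fce G d != f].

Definition ribbon_ok (G : ribbon) : Prop :=
  injective (rot G) /\
  (forall d, vtx G (rot G d) = vtx G d) /\
  (forall d d', vtx G d = vtx G d' -> fconnect (rot G) d d') /\
  (forall d, fce G (phi G d) = fce G d) /\
  (forall d d', fce G d = fce G d' -> fconnect (phi G) d d') /\
  (forall v, dartless_v G v -> dartless_f G (isoVF G v) /\ isoFV G (isoVF G v) = v) /\
  (forall f, dartless_f G f -> dartless_v G (isoFV G f) /\ isoVF G (isoFV G f) = f).

(* The dual: boundary components become vertices and vice versa;
   sigma* = phi, so phi* = phi \o flip = sigma. *)
Definition dual (G : ribbon) : ribbon :=
  @Ribbon (rF G) (rV G) (rE G) (phi G) (fce G) (vtx G) (isoFV G) (isoVF G).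

(* Number of boundary components of the ribbon subgraph of G with vertex set
   W and edge set B (edges of B are assumed to have both ends in W). *)
Definition alphaB (G : ribbon) (B : {set rE G}) (d : rE G * bool) :=
  if d.1 \in B then flip d else d.
Definition phiB (G : ribbon) (B : {set rE G}) (d : rE G * bool) :=
  rot G (alphaB G B d).
Definition nbound (G : ribbon) (W : {set rV G}) (B : {set rE G}) : nat :=
  #|[set [set y | fconnect (phiB G B) x y] | x in [set d | vtx G d \in W]]|
  + #|[set v in W | dartless_v G v]|.

Local Open Scope ring_scope.

(* One factor of the packaged surface Tutte polynomial:
   y^{n(G(G|A;P))} * prod_{K cpt of G(G|A;P)} ys (2 g(G,K)),
   where the variable y_{m/2} is encoded as ys m (m : int). *)
Definition tfactor (R : comNzRingType) (G : ribbon) (P : {set {set rV G}})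
    (w : {set rV G} -> nat) (A : {set rE G}) (y : R) (ys : int -> R) : R :=
  let blk := fun d : rE G * bool => pblock P (vtx G d) in
  let adj : rel {set rV G} := fun X Y =>
    [exists e in A, ((blk (e, true) == X) && (blk (e, false) == Y))
                    || ((blk (e, false) == X) && (blk (e, true) == Y))] in
  let comps := [set [set Y in P | connect adj X Y] | X in P] in
  let nul := ((#|A| + #|comps|) - #|P|)%N in
  let edgesK := fun K : {set {set rV G}} => [set e in A | blk (e, true) \in K] in
  let genus2 := fun K : {set {set rV G}} =>
    ((2 + #|edgesK K| + \sum_(X in K) w X)%N%:Z
      - (#|K| + nbound G (cover K) (edgesK K))%N%:Z)%R in
  y ^+ nul * \prod_(K in comps) ys (genus2 K).

Record pack := Pack {
  pG : ribbon;
  PV : {set {set rV pG}};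
  wV : {set rV pG} -> nat;
  PF : {set {set rF pG}};
  wF : {set rF pG} -> nat
}.
Arguments PV : clear implicits. Arguments wV : clear implicits.
Arguments PF : clear implicits. Arguments wF : clear implicits.

Definition pack_ok (P : pack) : Prop :=
  ribbon_ok (pG P) /\ partition (PV P) [set: rV (pG P)]
  /\ partition (PF P) [set: rF (pG P)].

Definition dual_pack (P : pack) : pack :=
  @Pack (dual (pG P)) (PF P) (wF P) (PV P) (wV P).

(* Packaged surface Tutte polynomial, evaluated at
   x, xs (xs m = x_{m/2}) and y, ys (ys m = y_{m/2}). *)
Definition surfTutte (R : comNzRingType) (P : pack) (x : R) (xs : int -> R)
    (y : R) (ys : int -> R) : R :=
  \sum_(A : {set rE (pG P)})
     tfactor R (dual (pG P)) (PF P) (wF P) (~: A) x xs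
   * tfactor R (pG P) (PV P) (wV P) A y ys.

(* Complementing the edge set, A |-> A^c, exchanges the two factors of the
   summand of T(G) indexed by A with those of the summand of T(G^* ) indexed
   by A^c, because duality is an involution: the vertex rotation of G^* is
   phi = rot \o flip, so that of G^** is rot \o flip \o flip = rot. *)
From Pilot Require Import Defs.
From mathcomp Require Import all_boot all_algebra.
From Stdlib Require Import FunctionalExtensionality.
Import GRing.Theory.

Lemma flipK (E : Type) : involutive (@flip E).
Proof. by case=> e b; rewrite /flip /= negbK. Qed.

Lemma phi_dual (G : ribbon) : phi (dual G) = Defs.rot G.
Proof. by apply: functional_extensionality => d; rewrite /phi /= /phi flipK. Qed.

(* Stated for [tfactor] rather than as [dual (dual G) = G]: the latter cannot
   be rewritten in terms whose types depend on [G]. *)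
Lemma tfactor_dualK (R : comNzRingType) (G : ribbon) :
  @tfactor R (dual (dual G)) = @tfactor R G.
Proof. by case: G => V F E r v f i j; rewrite [dual (dual _)]/dual phi_dual. Qed.

Theorem theorem3p5 (R : comNzRingType) (P : pack) :
  pack_ok P ->
  forall (x : R) (xs : int -> R) (y : R) (ys : int -> R),
    surfTutte R P x xs y ys = surfTutte R (dual_pack P) y ys x xs.
Proof.
move=> _ x xs y ys; rewrite /surfTutte /=.
rewrite (reindex_inj (@setC_inj _)) /=.
by apply: eq_bigr => A _; rewrite tfactor_dualK setCK mulrC.
Qed.
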